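(* Let $N(T)$ be a net on a grid $T$ with lines $s_i$, $t_j$. Suppose that $\|[\sigma_1,\sigma_2;\tau_1,\tau_2]N\|_\infty\le L$ holds (a) whenever $\sigma_1=s_i$, $\sigma_2=s_{i+1}$ and $\tau_1\ne\tau_2$ with $t_j\le\tau_1,\tau_2\le t_{j+1}$, for some $i,j\in\mathbb{Z}$, and (b) whenever $\tau_1=t_j$, $\tau_2=t_{j+1}$ and $\sigma_1\ne\sigma_2$ with $s_i\le\sigma_1,\sigma_2\le s_{i+1}$, for some $i,j\in\mathbb{Z}$. Then $N(T)$ has the BMSDD property with constant $L$.
   Context: For strictly increasing bi-infinite real sequences $(s_i)_{i\in\mathbb{Z}}$, $(t_j)_{j\in\mathbb{Z}}$, unbounded above and below, the grid is $T=\bigcup_i\{s_i\}\times\mathbb{R}\ \cup\ \bigcup_j\mathbb{R}\times\{t_j\}$; a net $N(T)$ is a function on $T$ with values in $\mathbb{R}^m$. For $\sigma_1\ne\sigma_2$, $\tau_1\ne\tau_2$, $[\sigma_1,\sigma_2;\tau_1,\tau_2]N=\frac{N(\sigma_1,\tau_1)+N(\sigma_2,\tau_2)-N(\sigma_2,\tau_1)-N(\sigma_1,\tau_2)}{(\sigma_1-\sigma_2)(\tau_1-\tau_2)}$. The net has the BMSDD property with constant $L$ if $\|[\sigma_1,\sigma_2;\tau_1,\tau_2]N\|_\infty\le L$ for all $\sigma_1\ne\sigma_2$, $\tau_1\ne\tau_2$ with $(\sigma_i,\tau_j)\in T$ for all $i,j\in\{1,2\}$. *)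

From HB Require Import structures.
From mathcomp Require Import all_boot all_order all_algebra.
From mathcomp Require Import reals.
Set Implicit Arguments. Unset Strict Implicit. Unset Printing Implicit Defensive.
Import Order.TTheory GRing.Theory Num.Theory.
Local Open Scope ring_scope.

Definition grid_seq (R : realType) (s : int -> R) : Prop :=
  (forall i : int, s i < s (i + 1)) /\
  (forall x : R, exists i : int, x < s i) /\
  (forall x : R, exists i : int, s i < x).

Definition on_grid (R : realType) (s t : int -> R) (x y : R) : Prop :=
  (exists i : int, x = s i) \/ (exists j : int, y = t j).

Definition infnorm (R : realType) (m : nat) (v : 'rV[R]_m) : R :=
  \big[Num.max/0]_(k < m) `|v 0 k|.

Definition divdiff (R : realType) (m : nat) (N : R -> R -> 'rV[R]_m)
  (s1 s2 t1 t2 : R) : 'rV[R]_m :=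
  ((s1 - s2) * (t1 - t2))^-1 *: (N s1 t1 + N s2 t2 - N s2 t1 - N s1 t2).

Definition BMSDD (R : realType) (m : nat) (s t : int -> R)
  (N : R -> R -> 'rV[R]_m) (L : R) : Prop :=
  forall s1 s2 t1 t2 : R, s1 != s2 -> t1 != t2 ->
    on_grid s t s1 t1 -> on_grid s t s1 t2 ->
    on_grid s t s2 t1 -> on_grid s t s2 t2 ->
    infnorm (divdiff N s1 s2 t1 t2) <= L.

(* The rectangle defect [f x1 y1 + f x2 y2 - f x2 y1 - f x1 y2] is additive when
   a rectangle is cut along either axis, and so is its area; hence the bound
   |defect| <= L * area passes from the pieces to their union. If all four
   corners of a rectangle lie on the grid, then either both vertical sides lie on
   grid lines s_a, s_b or both horizontal sides lie on grid lines t_a, t_b. In the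
   first case, cutting along the lines s_i and t_j leaves pieces with vertical
   sides s_i, s_(i+1) inside a strip t_j <= y <= t_(j+1), which hypothesis (a)
   covers; the second case is the transpose, covered by (b). The sup-norm bound
   is checked coordinatewise. *)

From mathcomp Require Import all_boot all_order all_algebra.
From mathcomp Require Import reals.
From mathcomp Require Import ring.
Set Implicit Arguments. Unset Strict Implicit.
Import Order.TTheory GRing.Theory Num.Theory.
Local Open Scope ring_scope.

Lemma int_le_addn (a b : int) : a <= b -> exists n : nat, b = a + n%:Z.
Proof. by move=> le_ab; exists `|b - a|%N; rewrite gez0_abs ?subr_ge0 // subrKC. Qed.

Lemma grid_seq_le_step (R : realType) (u : int -> R) :
  grid_seq u -> forall i, u i <= u (i + 1).
Proof. by move=> [u_incr _] i; apply: ltW. Qed.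

Section IntervalChains.
Variables (R : realType) (P : R -> R -> Prop).
Hypothesis P_refl : forall a, P a a.
Hypothesis P_trans : forall a b c, a <= b -> b <= c -> P a b -> P b c -> P a c.

Lemma le_steps (u : int -> R) : (forall i, u i <= u (i + 1)) ->
  forall i k, i <= k -> u i <= u k.
Proof.
move=> u_step i k /int_le_addn[n ->]; elim: n => [|n IH]; first by rewrite addr0.
by rewrite -addn1 PoszD addrA (le_trans IH).
Qed.

Lemma chain_steps (u : int -> R) : (forall i, u i <= u (i + 1)) ->
  (forall i, P (u i) (u (i + 1))) -> forall a b, a <= b -> P (u a) (u b).
Proof.
move=> u_step P_step a b /int_le_addn[n ->]; elim: n => [|n IH].
  by rewrite addr0.
rewrite -addn1 PoszD addrA.
by apply: P_trans (IH) (P_step _) => //; apply: le_steps; rewrite ?lerDl.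
Qed.

Lemma grid_cover (u : int -> R) : grid_seq u ->
  (forall j a b, u j <= a -> a <= b -> b <= u (j + 1) -> P a b) ->
  forall a b, a <= b -> P a b.
Proof.
move=> grid_u P_cell a b le_ab.
have [_ [u_above u_below]] := grid_u.
have u_step := grid_seq_le_step grid_u.
have [j lt_uj_a] := u_below a.
suff P_upto (n : nat) : forall x y, u j <= x -> x <= y -> y <= u (j + n%:Z) -> P x y.
  have [k lt_b_uk] := u_above b.
  apply: (P_upto `|k - j|%N) => //; first exact: ltW.
  apply: (le_trans (ltW lt_b_uk)); apply: le_steps => //.
  by rewrite -lerBlDl lez_abs.
elim: n => [|n IH] x y le_jx le_xy le_y.
  by have -> : y = x by apply/eqP; rewrite eq_le le_xy (le_trans le_y) ?addr0.
rewrite -addn1 PoszD addrA in le_y.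
have [le_y_mid | lt_mid_y] := leP y (u (j + n)); first exact: IH.
have [le_mid_x | lt_x_mid] := leP (u (j + n)) x; first exact: P_cell le_y.
apply: (P_trans (ltW lt_x_mid) (ltW lt_mid_y)).
  exact: IH le_jx (ltW lt_x_mid) (lexx _).
exact: P_cell (ltW lt_mid_y) le_y.
Qed.

End IntervalChains.

Section RectangleBounds.
Variable R : realType.
Implicit Types (f : R -> R -> R) (L : R).

Definition rect_diff f x1 x2 y1 y2 : R := f x1 y1 + f x2 y2 - f x2 y1 - f x1 y2.

Definition rect_bounded f L x1 x2 y1 y2 : bool :=
  `|rect_diff f x1 x2 y1 y2| <= L * `|x1 - x2| * `|y1 - y2|.

Lemma rect_bounded_transpose f L (x1 x2 y1 y2 : R) :
  rect_bounded (fun y x => f x y) L y1 y2 x1 x2 = rect_bounded f L x1 x2 y1 y2.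
Proof.
rewrite /rect_bounded -mulrA [`|y1 - y2| * _]mulrC mulrA.
suff -> : rect_diff (fun y x => f x y) y1 y2 x1 x2 = rect_diff f x1 x2 y1 y2 by [].
by rewrite /rect_diff; ring.
Qed.

Lemma rect_boundedCx f L (x1 x2 y1 y2 : R) :
  rect_bounded f L x2 x1 y1 y2 = rect_bounded f L x1 x2 y1 y2.
Proof.
rewrite /rect_bounded [`|x2 - x1|]distrC.
suff -> : rect_diff f x2 x1 y1 y2 = - rect_diff f x1 x2 y1 y2 by rewrite normrN.
by rewrite /rect_diff; ring.
Qed.

Lemma rect_boundedCy f L (x1 x2 y1 y2 : R) :
  rect_bounded f L x1 x2 y2 y1 = rect_bounded f L x1 x2 y1 y2.
Proof.
by rewrite -[LHS]rect_bounded_transpose rect_boundedCx rect_bounded_transpose.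
Qed.

Lemma rect_bounded_eqx f L (x y1 y2 : R) : rect_bounded f L x x y1 y2.
Proof.
rewrite /rect_bounded subrr normr0 mulr0 mul0r.
suff -> : rect_diff f x x y1 y2 = 0 by rewrite normr0.
by rewrite /rect_diff; ring.
Qed.

Lemma rect_bounded_eqy f L (x1 x2 y : R) : rect_bounded f L x1 x2 y y.
Proof. by rewrite -rect_bounded_transpose rect_bounded_eqx. Qed.

Lemma rect_bounded_transx f L (x1 x2 x3 y1 y2 : R) : x1 <= x2 -> x2 <= x3 ->
  rect_bounded f L x1 x2 y1 y2 -> rect_bounded f L x2 x3 y1 y2 ->
  rect_bounded f L x1 x3 y1 y2.
Proof.
move=> le12 le23 b12 b23; rewrite /rect_bounded.
have -> : rect_diff f x1 x3 y1 y2 = rect_diff f x1 x2 y1 y2 + rect_diff f x2 x3 y1 y2.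
  by rewrite /rect_diff; ring.
have -> : `|x1 - x3| = `|x1 - x2| + `|x2 - x3|.
  by rewrite !ler0_norm ?subr_le0 ?(le_trans le12) //; ring.
rewrite mulrDr mulrDl; apply: le_trans (ler_normD _ _) _.
exact: lerD b12 b23.
Qed.

Lemma rect_bounded_transy f L (x1 x2 y1 y2 y3 : R) : y1 <= y2 -> y2 <= y3 ->
  rect_bounded f L x1 x2 y1 y2 -> rect_bounded f L x1 x2 y2 y3 ->
  rect_bounded f L x1 x2 y1 y3.
Proof.
move=> le12 le23 b12 b23; rewrite -rect_bounded_transpose.
by apply: (rect_bounded_transx (x2 := y2)) => //; rewrite rect_bounded_transpose.
Qed.

End RectangleBounds.

Section GridRectangles.
Variable R : realType.
Implicit Types (s t : int -> R) (f : R -> R -> R) (L : R).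

Lemma rect_bounded_between_columns s t f L :
  (forall i, s i <= s (i + 1)) -> grid_seq t ->
  (forall i j y1 y2, t j <= y1 -> y1 <= y2 -> y2 <= t (j + 1) ->
     rect_bounded f L (s i) (s (i + 1)) y1 y2) ->
  forall a b y1 y2, rect_bounded f L (s a) (s b) y1 y2.
Proof.
move=> s_step grid_t cell a b y1 y2.
wlog le_y : y1 y2 / y1 <= y2.
  by move=> H; case: (leP y1 y2) => [/H // | /ltW /H]; rewrite rect_boundedCy.
wlog le_ab : a b / a <= b.
  by move=> H; case: (leP a b) => [/H // | /ltW /H]; rewrite rect_boundedCx.
apply: (chain_steps (P := fun x1 x2 => rect_bounded f L x1 x2 y1 y2) _ _ s_step _ le_ab).
- by move=> x; apply: rect_bounded_eqx.
- by move=> x1 x2 x3; apply: rect_bounded_transx.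
move=> i; apply: (grid_cover (P := rect_bounded f L (s i) (s (i + 1))) _ _ grid_t _ le_y).
- by move=> y; apply: rect_bounded_eqy.
- by move=> y y' y''; apply: rect_bounded_transy.
- by move=> j; apply: cell.
Qed.

Lemma rect_bounded_on_grid s t f L : grid_seq s -> grid_seq t ->
  (forall i j y1 y2, t j <= y1 -> y1 <= y2 -> y2 <= t (j + 1) ->
     rect_bounded f L (s i) (s (i + 1)) y1 y2) ->
  (forall i j x1 x2, s i <= x1 -> x1 <= x2 -> x2 <= s (i + 1) ->
     rect_bounded f L x1 x2 (t j) (t (j + 1))) ->
  forall x1 x2 y1 y2, on_grid s t x1 y1 -> on_grid s t x1 y2 ->
    on_grid s t x2 y1 -> on_grid s t x2 y2 -> rect_bounded f L x1 x2 y1 y2.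
Proof.
move=> grid_s grid_t cell_s cell_t x1 x2 y1 y2 c11 c12 c21 c22.
have [[[a ->] [b ->]] | [[a ->] [b ->]]] :
    ((exists a, x1 = s a) /\ (exists b, x2 = s b)) \/
    ((exists a, y1 = t a) /\ (exists b, y2 = t b)).
  by move: c11 c12 c21 c22; rewrite /on_grid; tauto.
- exact: (rect_bounded_between_columns (grid_seq_le_step grid_s) grid_t cell_s).
- rewrite -rect_bounded_transpose.
  apply: (rect_bounded_between_columns (grid_seq_le_step grid_t) grid_s).
  move=> j i z1 z2 le1 le12 le2.
  by rewrite rect_bounded_transpose; apply: cell_t le1 le12 le2.
Qed.

Lemma norm_divdiff_le m (N : R -> R -> 'rV[R]_m) (k : 'I_m) L x1 x2 y1 y2 :
  x1 != x2 -> y1 != y2 ->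
  (`|divdiff N x1 x2 y1 y2 0 k| <= L) =
  rect_bounded (fun x y => N x y 0 k) L x1 x2 y1 y2.
Proof.
move=> ne_x ne_y.
have area_gt0 : 0 < `|(x1 - x2) * (y1 - y2)| by rewrite normr_gt0 mulf_neq0 ?subr_eq0.
rewrite /divdiff /rect_bounded /rect_diff !mxE normrM normfV ler_pdivrMl //.
by rewrite normrM mulrC mulrA.
Qed.

Lemma rect_bounded_of_divdiff m (N : R -> R -> 'rV[R]_m) (k : 'I_m) L x1 x2 y1 y2 :
  (x1 != x2 -> y1 != y2 -> infnorm (divdiff N x1 x2 y1 y2) <= L) ->
  rect_bounded (fun x y => N x y 0 k) L x1 x2 y1 y2.
Proof.
move=> bound.
have [-> | ne_x] := eqVneq x1 x2; first exact: rect_bounded_eqx.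
have [-> | ne_y] := eqVneq y1 y2; first exact: rect_bounded_eqy.
have /bigmax_leP[_ /(_ k isT)] := bound ne_x ne_y.
by rewrite norm_divdiff_le.
Qed.

End GridRectangles.

Theorem lemma3 (R : realType) (m : nat) (s t : int -> R)
  (N : R -> R -> 'rV[R]_m) (L : R) :
  grid_seq s -> grid_seq t ->
  (forall (i j : int) (t1 t2 : R), t1 != t2 ->
     t j <= t1 <= t (j + 1) -> t j <= t2 <= t (j + 1) ->
     infnorm (divdiff N (s i) (s (i + 1)) t1 t2) <= L) ->
  (forall (i j : int) (s1 s2 : R), s1 != s2 ->
     s i <= s1 <= s (i + 1) -> s i <= s2 <= s (i + 1) ->
     infnorm (divdiff N s1 s2 (t j) (t (j + 1))) <= L) ->
  BMSDD s t N L.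
Proof.
move=> grid_s grid_t cell_s cell_t x1 x2 y1 y2 ne_x ne_y c11 c12 c21 c22.
have t_incr := grid_t.1 0.
have /bigmax_leP[L_ge0 _] : infnorm (divdiff N (s 0) (s (0 + 1)) (t 0) (t (0 + 1))) <= L.
  by apply: (cell_s 0 0); rewrite ?lt_eqF ?lexx ?(ltW t_incr).
apply/bigmax_leP; split=> // k _; rewrite norm_divdiff_le //.
apply: (rect_bounded_on_grid grid_s grid_t) c11 c12 c21 c22.
- move=> i j z1 z2 le1 le12 le2; apply: rect_bounded_of_divdiff => _ ne_z.
  by apply: (cell_s i j); rewrite ?le1 ?le2 ?(le_trans le12) ?(le_trans le1).
- move=> i j z1 z2 le1 le12 le2; apply: rect_bounded_of_divdiff => ne_z _.
  by apply: (cell_t i j); rewrite ?le1 ?le2 ?(le_trans le12) ?(le_trans le1).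
Qed.
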